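(* Let $m\ge3$, $d\ge1$, $n\in\mathbb{N}_0^d$, and $v=t^1\cdots t^m$. For each $c\in\mathbb{R}^d$, the section $x=c$ of the hypersurface $\{(t,x)\in\mathbb{R}^{m+d}:\ H_n(v,x)=0\}$, i.e. the set $\{t\in\mathbb{R}^m_+:\ H_n(t^1\cdots t^m,c)=0\}$, is a union of Tzitzeica hypersurfaces in $\mathbb{R}^m_+$.
   Context: For $n=(n_1,\dots,n_d)\in\mathbb{N}_0^d$ and $\xi\in\mathbb{R}^d$, $\xi^n=(\xi^1)^{n_1}\cdots(\xi^d)^{n_d}$. The Hermite polynomials $H_n(v,x)$, $v\ge0$, $x\in\mathbb{R}^d$, are defined by the generating function $e^{\langle x,\xi\rangle-\frac12 v\|\xi\|^2}=\sum_{n\in\mathbb{N}_0^d}H_n(v,x)\xi^n$. A hypersurface $M\subset\mathbb{R}^m_+$, $m\ge3$, is a Tzitzeica hypersurface if there is a constant $a\in\mathbb{R}$ such that $K=a\,d^{m+1}$ at every point $t\in M$, where $K$ is the Gauss curvature of $M$ at $t$ and $d$ is the distance from the origin to the tangent hyperplane of $M$ at $t$; the simplest examples are the level sets $t^1\cdots t^m=k$. *)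

From HB Require Import structures.
From mathcomp Require Import all_boot all_order all_algebra.
From mathcomp Require Import all_classical all_reals all_analysis.
Set Implicit Arguments. Unset Strict Implicit. Unset Printing Implicit Defensive.
Import Order.TTheory GRing.Theory Num.Theory.
Import numFieldNormedType.Exports.
Local Open Scope classical_set_scope.
Local Open Scope ring_scope.

Section Defs.
Variable R : realType.

Definition dotv (m : nat) (u w : 'rV[R]_m) : R := \sum_(i < m) u 0 i * w 0 i.
Definition enorm (m : nat) (u : 'rV[R]_m) : R := Num.sqrt (dotv u u).

Definition posorthant (m : nat) : set 'rV[R]_m := [set t | forall i, 0 < t 0 i].

Definition pD (m : nat) (i : 'I_m) (F : 'rV[R]_m -> R) : 'rV[R]_m -> R :=
  fun t => 'D_(delta_mx 0 i) F t.
Definition iterD (m : nat) (s : seq 'I_m) (F : 'rV[R]_m -> R) : 'rV[R]_m -> R :=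
  foldr (@pD m) F s.

Definition smooth_on (m : nat) (U : set 'rV[R]_m) (F : 'rV[R]_m -> R) : Prop :=
  forall (s : seq 'I_m) (t : 'rV[R]_m), U t ->
    {for t, continuous (iterD s F)} /\
    forall i : 'I_m, derivable (iterD s F) t (delta_mx 0 i).

Definition grad (m : nat) (F : 'rV[R]_m -> R) (t : 'rV[R]_m) : 'rV[R]_m :=
  \row_i pD i F t.

Definition unormal (m : nat) (F : 'rV[R]_m -> R) (t : 'rV[R]_m) : 'rV[R]_m :=
  (enorm (grad F t))^-1 *: grad F t.

Definition hypersurface_by (m : nat) (M : set 'rV[R]_m) (F : 'rV[R]_m -> R) : Prop :=
  smooth_on (@posorthant m) F /\
  M = [set t | posorthant t /\ F t = 0] /\
  (forall t, M t -> grad F t != 0).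

Definition tangent_onb (m : nat) (F : 'rV[R]_m -> R) (t : 'rV[R]_m)
    (e : 'I_m.-1 -> 'rV[R]_m) : Prop :=
  (forall i j, dotv (e i) (e j) = (i == j)%:R) /\
  (forall i, dotv (e i) (grad F t) = 0).

Definition shape_matrix (m : nat) (F : 'rV[R]_m -> R) (t : 'rV[R]_m)
    (e : 'I_m.-1 -> 'rV[R]_m) : 'M[R]_(m.-1) :=
  \matrix_(i, j) (- dotv ('D_(e j) (unormal F) t) (e i)).

Definition gauss_curvature (m : nat) (F : 'rV[R]_m -> R) (t : 'rV[R]_m)
    (e : 'I_m.-1 -> 'rV[R]_m) : R := \det (shape_matrix F t e).

Definition dist_tangent (m : nat) (F : 'rV[R]_m -> R) (t : 'rV[R]_m) : R :=
  `| dotv t (unormal F t) |.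

Definition tzitzeica (m : nat) (M : set 'rV[R]_m) : Prop :=
  exists F : 'rV[R]_m -> R, hypersurface_by M F /\
  exists a : R, forall t, M t -> forall e, tangent_onb F t e ->
    gauss_curvature F t e = a * dist_tangent F t ^+ m.+1.

Definition union_of_tzitzeica (m : nat) (S : set 'rV[R]_m) : Prop :=
  S `<=` @posorthant m /\
  forall t, S t -> exists M : set 'rV[R]_m, tzitzeica M /\ M t /\ M `<=` S.

(* Hermite polynomials H_n(v,x): coefficient of xi^n in
   exp(<x,xi> - v |xi|^2 / 2) = prod_i exp(x_i xi_i - v xi_i^2/2). *)
Definition hermite1 (k : nat) (v y : R) : R :=
  \sum_(j < k./2.+1)
     (- (v / 2)) ^+ j * y ^+ (k - 2 * j) / ((j`!)%:R * ((k - 2 * j)`!)%:R).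

Definition hermite (d : nat) (n : 'I_d -> nat) (v : R) (x : 'rV[R]_d) : R :=
  \prod_(i < d) hermite1 (n i) v (x 0 i).

End Defs.

From Pilot Require Import Defs.
From mathcomp Require Import all_boot all_order all_algebra.
From mathcomp Require Import all_classical all_reals all_analysis.
From mathcomp Require Import ring.

(* The equation H_n(t^1...t^m, c) = 0 only involves the product of the
   coordinates, so its solution set in R^m_+ is the union of the level sets
   {t^1...t^m = k}.  Each of them is cut out by F = t^1...t^m - k, whose unit
   normal is N = r / |r| with r = (1/t^1, ..., 1/t^m); since d = <t, N> = m/|r|
   and the shape operator is |r|^-1 diag(t_i^-2) compressed to r^perp, a
   determinant identity for such compressions gives K = k^-2 m^-m d^(m+1). *)
Set Implicit Arguments. Unset Strict Implicit. Unset Printing Implicit Defensive.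
Import Order.TTheory GRing.Theory Num.Theory.
Import numFieldNormedType.Exports.
Local Open Scope classical_set_scope.
Local Open Scope ring_scope.

Section Euclid.
Variable R : realType.

Lemma dotvC m (x y : 'rV[R]_m) : dotv x y = dotv y x.
Proof. by apply: eq_bigr => k _; rewrite mulrC. Qed.

Lemma dotvZl m a (x y : 'rV[R]_m) : dotv (a *: x) y = a * dotv x y.
Proof. by rewrite /dotv mulr_sumr; apply: eq_bigr => k _; rewrite !mxE mulrA. Qed.

Lemma dotvZr m a (x y : 'rV[R]_m) : dotv x (a *: y) = a * dotv x y.
Proof. by rewrite dotvC dotvZl dotvC. Qed.

Lemma enormZ m a (x : 'rV[R]_m) : 0 <= a -> enorm (a *: x) = a * enorm x.
Proof.
move=> a0; rewrite /enorm dotvZl dotvZr mulrA -expr2 sqrtrM ?sqr_ge0 //.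
by rewrite sqrtr_sqr ger0_norm.
Qed.

Lemma near_posorthant m (t : 'rV[R]_m) :
  posorthant t -> \forall s \near t, posorthant s.
Proof.
move=> tp; have coord_gt0 k : \forall s \near t, 0 < (s : 'rV[R]_m) 0 k.
  exact: (cvgr_gt _ (@coord_continuous R 1 m 0 k t) _ (tp k)).
exact: (@filter_forall _ 'I_m (fun k (s : 'rV[R]_m) => 0 < s 0 k) _ _ coord_gt0).
Qed.

Lemma posorthant_prod_gt0 m (s : 'rV[R]_m) : posorthant s -> 0 < \prod_j s 0 j.
Proof. by move=> sp; apply: prodr_gt0 => j _; exact: sp. Qed.

(* Both sides come from the two block factorisations of [Y D Q^T], where
   [Q = (r; e)] and [Y = (r D^-1; e)]. *)
Lemma det_tangent_diag_form n (e : 'I_n -> 'rV[R]_n.+1) (r : 'rV[R]_n.+1)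
    (dl : 'I_n.+1 -> R) :
  (forall i j, dotv (e i) (e j) = (i == j)%:R) -> (forall i, dotv (e i) r = 0) ->
  (forall k, dl k != 0) ->
  dotv r r * \det (\matrix_(i, j) \sum_k dl k * e i 0 k * e j 0 k)
  = (\prod_k dl k) * \sum_k (dl k)^-1 * r 0 k ^+ 2.
Proof.
move=> eo er dl0.
pose E : 'M[R]_(n, n.+1) := \matrix_(i, k) e i 0 k.
pose D := diag_mx (\row_k dl k); pose D' := diag_mx (\row_k (dl k)^-1).
pose Q : 'M[R]_(1 + n, n.+1) := col_mx r E.
pose Y : 'M[R]_(1 + n, n.+1) := col_mx (r *m D') E.
have YDQ : Y *m D *m Q^T = block_mx (dotv r r)%:M 0 (E *m D *m r^T)
    (\matrix_(i, j) \sum_k dl k * e i 0 k * e j 0 k).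
  rewrite /Y /Q mul_col_mx tr_col_mx mul_col_row; congr block_mx.
  - apply/matrixP => i j; rewrite !(ord1 i) !(ord1 j) !mxE eqxx mulr1n.
    by apply: eq_bigr => k _; rewrite !mul_mx_diag !mxE; field.
  - apply/matrixP => i j; rewrite !(ord1 i) !mxE; rewrite -[RHS](er j).
    apply: eq_bigr => k _; rewrite !mul_mx_diag !mxE.
    by rewrite mulrC -mulrA mulVf ?mulr1.
  - apply/matrixP => i j; rewrite !mxE.
    by apply: eq_bigr => k _; rewrite !mul_mx_diag !mxE; ring.
have YQ : Y *m Q^T = block_mx (\sum_k (dl k)^-1 * r 0 k ^+ 2)%:M (r *m D' *m E^T)
    0 1%:M.
  rewrite /Y /Q tr_col_mx mul_col_row; congr block_mx.
  - apply/matrixP => i j; rewrite !(ord1 i) !(ord1 j) !mxE eqxx mulr1n.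
    by apply: eq_bigr => k _; rewrite !mul_mx_diag !mxE; ring.
  - apply/matrixP => i j; rewrite !(ord1 j) !mxE; rewrite -[RHS](er i).
    by apply: eq_bigr => k _; rewrite ?mxE.
  - apply/matrixP => i j; rewrite !mxE -[RHS]eo.
    by apply: eq_bigr => k _; rewrite ?mxE.
move: (congr1 determinant YDQ) (congr1 determinant YQ).
rewrite det_lblock det_ublock !det_scalar1 det1 mulr1 !det_mulmx det_diag.
rewrite (eq_bigr dl) => [<- <-|k _]; last by rewrite mxE.
ring.
Qed.

End Euclid.

Section Monomial.
Variables (R : realType) (m : nat).

Definition monomial (a : R) (A : {set 'I_m}) (b : R) : 'rV[R]_m -> R :=
  fun s => a * \prod_(j in A) s 0 j + b.

Lemma shift_deltaE (i j : 'I_m) (h : R) (s : 'rV[R]_m) :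
  (h *: delta_mx 0 i + s) 0 j = (if j == i then h else 0) + s 0 j.
Proof. by rewrite !mxE eqxx /=; case: eqP => _; rewrite ?mulr1 ?mulr0. Qed.

Lemma monomial_diff_quotient a A b (i : 'I_m) (s : 'rV[R]_m) (h : R) : h != 0 ->
  h^-1 *: (monomial a A b (h *: delta_mx 0 i + s) - monomial a A b s)
  = monomial (if i \in A then a else 0) (A :\ i) 0 s.
Proof.
move=> h0; rewrite /monomial addr0.
have [iA|iA] := boolP (i \in A); last first.
  rewrite (eq_bigr (fun j => s 0 j)) ?subrr ?scaler0 ?mul0r // => j jA.
  by rewrite shift_deltaE; case: eqP => [ji|_]; [rewrite -ji jA in iA | rewrite add0r].
rewrite (big_setD1 i iA) [in X in _ - X](big_setD1 i iA) /= shift_deltaE eqxx.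
rewrite (eq_bigr (fun j => s 0 j)) => [|j]; first by rewrite /GRing.scale /=; field.
by rewrite in_setD1 => /andP[ji _]; rewrite shift_deltaE (negbTE ji) add0r.
Qed.

Lemma monomial_derive_cvg a A b (i : 'I_m) (s : 'rV[R]_m) :
  (fun h : R => h^-1 *: ((monomial a A b \o shift s) (h *: delta_mx 0 i)
                         - monomial a A b s))
  @ (0:R)^' --> monomial (if i \in A then a else 0) (A :\ i) 0 s.
Proof.
apply: cvg_trans (near_eq_cvg _) (cvg_cst _).
near=> h; rewrite /= monomial_diff_quotient //; near: h; exact: nbhs_dnbhs_neq.
Unshelve. all: by end_near. Qed.

Lemma pD_monomial a A b (i : 'I_m) :
  pD i (monomial a A b) = monomial (if i \in A then a else 0) (A :\ i) 0.
Proof. by apply/funext => s; apply: cvg_lim => //; exact: monomial_derive_cvg. Qed.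

Lemma derivable_monomial a A b (i : 'I_m) s :
  derivable (monomial a A b) s (delta_mx 0 i).
Proof. by apply/cvg_ex; eexists; exact: monomial_derive_cvg. Qed.

Lemma continuous_bigprod (G : 'I_m -> 'rV[R]_m -> R) (r : seq 'I_m) x :
  (forall j, {for x, continuous (G j)}) ->
  {for x, continuous (fun s => \prod_(j <- r) G j s)}.
Proof.
move=> HG; elim: r => [|j r IH].
  rewrite (_ : (fun s => _) = cst 1); first exact: cst_continuous.
  by apply/funext => s; rewrite big_nil.
rewrite (_ : (fun s => _) = G j \* (fun s => \prod_(j <- r) G j s)).
  exact: continuousM.
by apply/funext => s; rewrite big_cons.
Qed.

Lemma continuous_monomial a A b (x : 'rV[R]_m) : {for x, continuous (monomial a A b)}.
Proof.
have -> : monomial a A b = cst a \* (fun s => \prod_(j <- index_enum 'I_m)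
    (if j \in A then s 0 j else 1)) + cst b.
  by apply/funext => s; rewrite /monomial /= big_mkcond.
apply: continuousD; last exact: cst_continuous.
apply: continuousM; first exact: cst_continuous.
apply: (continuous_bigprod (G := fun j s => if j \in A then s 0 j else 1)) => j.
by case: (j \in A); [exact: coord_continuous | exact: cst_continuous].
Qed.

Lemma iterD_monomial (a : R) (A : {set 'I_m}) (b : R) (l : seq 'I_m) :
  exists (a' : R) (A' : {set 'I_m}) (b' : R),
    Defs.iterD l (monomial a A b) = monomial a' A' b'.
Proof.
elim: l => [|i l [a' [A' [b' IH]]]]; first by exists a, A, b.
by exists (if i \in A' then a' else 0), (A' :\ i), 0; rewrite /= IH pD_monomial.
Qed.

Lemma smooth_on_monomial (U : set 'rV[R]_m) a A b : smooth_on U (monomial a A b).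
Proof.
move=> l t _; have [a' [A' [b' ->]]] := iterD_monomial a A b l.
by split=> [|i]; [exact: continuous_monomial | exact: derivable_monomial].
Qed.

End Monomial.

Section ReciprocalNormal.
Variables (R : realType) (n : nat).
Local Notation V := 'rV[R]_n.+1.

Lemma derive_coord (t v : V) k : 'D_v (fun s : V => s 0 k) t = v 0 k.
Proof.
apply: cvg_lim => //; apply: cvg_trans (near_eq_cvg _) (cvg_cst (v 0 k)).
near=> h; apply/esym; rewrite /= !mxE addrK /GRing.scale /= mulrA mulVf ?mul1r //.
near: h; exact: nbhs_dnbhs_neq.
Unshelve. all: by end_near. Qed.

Lemma derivable_coord (t v : V) k : derivable (fun s : V => s 0 k) t v.
Proof. exact/diff_derivable/differentiable_coord. Qed.

Definition recip (s : V) : V := \row_k (s 0 k)^-1.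
Definition recip_invnorm (s : V) : R := (enorm (recip s))^-1.
Definition recip_unit (s : V) : V := recip_invnorm s *: recip s.

Lemma dotv_recip_gt0 (s : V) : posorthant s -> 0 < dotv (recip s) (recip s).
Proof.
move=> sp; rewrite /dotv big_ord_recl ltr_pwDl //.
  by rewrite !mxE mulr_gt0 // invr_gt0; exact: sp.
by apply: sumr_ge0 => k _; rewrite !mxE mulr_ge0 // invr_ge0 ltW //; exact: sp.
Qed.

Lemma recip_invnorm_gt0 (s : V) : posorthant s -> 0 < recip_invnorm s.
Proof. by move=> sp; rewrite invr_gt0 sqrtr_gt0 dotv_recip_gt0. Qed.

Lemma differentiable_recip_invnorm (t : V) :
  posorthant t -> differentiable recip_invnorm t.
Proof.
move=> tp.
have dinv k : differentiable (fun s : V => (s 0 k)^-1) t.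
  by apply: differentiableV; [exact: differentiable_coord | rewrite gt_eqF ?tp].
have dsum : differentiable (fun s : V => dotv (recip s) (recip s)) t.
  rewrite (_ : (fun s => _) = \sum_k (fun s : V => (s 0 k)^-1 * (s 0 k)^-1)).
    by apply: differentiable_sum => k; exact: differentiableM.
  by rewrite fct_sumE; apply/funext => s; apply: eq_bigr => k _; rewrite !mxE.
have dsqrt : differentiable (Num.sqrt \o (fun s : V => dotv (recip s) (recip s))) t.
  apply: differentiable_comp => //; apply/derivable1_diffP.
  by case: (is_derive1_sqrt (dotv_recip_gt0 tp)).
by apply: differentiableV dsqrt _; rewrite /= gt_eqF // sqrtr_gt0 dotv_recip_gt0.
Qed.

Lemma derive_recip_unit_dotv (t e v : V) : posorthant t ->
  dotv ('D_v recip_unit t) e =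
  - recip_invnorm t * \sum_k (t 0 k)^-2 * v 0 k * e 0 k
  + 'D_v recip_invnorm t * dotv (recip t) e.
Proof.
move=> tp; have t0 k : t 0 k != 0 by rewrite gt_eqF ?tp.
have dw : derivable recip_invnorm t v.
  exact/diff_derivable/differentiable_recip_invnorm.
have dinv k : derivable (fun s : V => (s 0 k)^-1) t v.
  by apply: derivableV; [exact: t0 | exact: derivable_coord].
have Dinv k : 'D_v (fun s : V => (s 0 k)^-1) t = - (t 0 k)^-2 * v 0 k.
  by rewrite deriveV ?derive_coord //; exact: derivable_coord.
have coordE k : (fun s : V => recip_unit s 0 k)
    = recip_invnorm * (fun s : V => (s 0 k)^-1).
  by apply/funext => s; rewrite !mxE.
have du : derivable recip_unit t v.
  by apply/derivable_mxP => i j; rewrite (ord1 i) coordE; exact: derivableM.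
rewrite (derive_mx du) /dotv mulr_sumr mulr_sumr -big_split /=.
apply: eq_bigr => k _.
by rewrite mxE coordE deriveM // Dinv /recip mxE /GRing.scale /=; ring.
Qed.

End ReciprocalNormal.

Section ProductLevelSets.
Variable R : realType.

Definition prod_level m (k : R) : 'rV[R]_m -> R := monomial 1 [set: 'I_m]%SET (- k).

Lemma prod_setT m (s : 'rV[R]_m) : \prod_(j in [set: 'I_m]%SET) s 0 j = \prod_j s 0 j.
Proof. by apply: eq_bigl => j; rewrite finset.in_setT. Qed.

Lemma prod_levelE m k (s : 'rV[R]_m) : prod_level k s = \prod_j s 0 j - k.
Proof. by rewrite /prod_level /monomial mul1r prod_setT. Qed.

Lemma grad_prod_level n k (s : 'rV[R]_n.+1) : posorthant s ->
  grad (prod_level k) s = (\prod_j s 0 j) *: recip s.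
Proof.
move=> sp; apply/matrixP => i j; rewrite !mxE /prod_level.
rewrite pD_monomial /monomial finset.in_setT mul1r addr0 -prod_setT.
rewrite [in RHS](big_setD1 j) ?finset.in_setT //=.
by field; rewrite gt_eqF ?sp.
Qed.

Lemma grad_prod_level_neq0 n k (s : 'rV[R]_n.+1) : posorthant s ->
  grad (prod_level k) s != 0.
Proof.
move=> sp; apply/negP => /eqP/(congr1 (fun x : 'rV[R]_n.+1 => x 0 ord0)).
rewrite grad_prod_level // !mxE => /eqP; rewrite mulf_eq0 invr_eq0.
by rewrite !gt_eqF ?posorthant_prod_gt0 ?sp.
Qed.

Lemma unormal_prod_level n k (s : 'rV[R]_n.+1) : posorthant s ->
  unormal (prod_level k) s = recip_unit s.
Proof.
move=> sp; have P0 := posorthant_prod_gt0 sp.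
rewrite /unormal grad_prod_level // enormZ ?ltW // scalerA invfM mulrAC.
by rewrite mulVf ?gt_eqF ?mul1r.
Qed.

Lemma dist_tangent_prod_level n k (t : 'rV[R]_n.+1) : posorthant t ->
  dist_tangent (prod_level k) t = recip_invnorm t * n.+1%:R.
Proof.
move=> tp; rewrite /dist_tangent unormal_prod_level // /recip_unit dotvZr.
have -> : dotv t (recip t) = n.+1%:R.
  rewrite /dotv (eq_bigr (fun _ => 1)) ?sumr_const ?card_ord // => j _.
  by rewrite mxE mulfV ?gt_eqF ?tp.
by rewrite ger0_norm // mulr_ge0 ?ltW ?recip_invnorm_gt0.
Qed.

(* Tangent vectors are orthogonal to [recip t], so the derivative of the
   scalar factor [recip_invnorm] of the unit normal drops out. *)
Lemma shape_matrix_prod_level n k (t : 'rV[R]_n.+1) (e : 'I_n -> 'rV[R]_n.+1) :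
  posorthant t -> tangent_onb (prod_level k) t e ->
  shape_matrix (prod_level k) t e
  = recip_invnorm t *: \matrix_(i, j) \sum_l (t 0 l)^-2 * e i 0 l * e j 0 l.
Proof.
move=> tp [_ eg]; have P0 := posorthant_prod_gt0 tp.
have er i : dotv (recip t) (e i) = 0.
  move: (eg i); rewrite dotvC grad_prod_level // dotvZl => /eqP.
  by rewrite mulf_eq0 gt_eqF //= => /eqP.
have near_unormal : \forall s \near t, unormal (prod_level k) s = recip_unit s.
  by apply: filterS (near_posorthant tp) => s; exact: unormal_prod_level.
apply/matrixP => i j; rewrite !mxE (near_eq_derive _ near_unormal).
rewrite derive_recip_unit_dotv // er mulr0 addr0 mulNr opprK mulr_sumr.
by rewrite mulr_sumr; apply: eq_bigr => l _; ring.
Qed.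

Lemma gauss_curvature_prod_level n k (t : 'rV[R]_n.+1) (e : 'I_n -> 'rV[R]_n.+1) :
  posorthant t -> \prod_j t 0 j = k -> tangent_onb (prod_level k) t e ->
  gauss_curvature (prod_level k) t e
  = k^-2 / n.+1%:R ^+ n.+1 * dist_tangent (prod_level k) t ^+ n.+2.
Proof.
move=> tp tk he; have [eo eg] := he; have t0 l : t 0 l != 0 by rewrite gt_eqF ?tp.
have er i : dotv (e i) (recip t) = 0.
  move: (eg i); rewrite grad_prod_level // dotvZr => /eqP.
  by rewrite mulf_eq0 gt_eqF ?posorthant_prod_gt0 //= => /eqP.
have := det_tangent_diag_form eo er (dl := fun l => (t 0 l)^-2)
  (fun l => invr_neq0 (expf_neq0 2 (t0 l))).
have -> : \sum_l ((t 0 l)^-2)^-1 * recip t 0 l ^+ 2 = n.+1%:R.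
  rewrite (eq_bigr (fun _ => 1)) ?sumr_const ?card_ord // => l _.
  by rewrite mxE; field.
rewrite prodfV prodrXl tk => detB.
have w2 : recip_invnorm t ^+ 2 * dotv (recip t) (recip t) = 1.
  by rewrite exprVn sqr_sqrtr ?ltW ?dotv_recip_gt0 // mulVf ?gt_eqF ?dotv_recip_gt0.
rewrite /gauss_curvature (shape_matrix_prod_level tp he) dist_tangent_prod_level //.
change n.+1.-1 with n.
have detE : \det (\matrix_(i, j) \sum_l (t 0 l)^-2 * e i 0 l * e j 0 l)
    = recip_invnorm t ^+ 2 * (k^-2 * n.+1%:R) by rewrite -detB mulrA w2 mul1r.
rewrite detZ detE; set w := recip_invnorm t; set N := n.+1%:R.
rewrite exprMn (exprS N n.+1) (exprS w n.+1) (exprS w n).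
have N0 : N != 0 by rewrite pnatr_eq0.
have k0 : k != 0 by rewrite -tk gt_eqF ?posorthant_prod_gt0.
by field; rewrite expf_neq0.
Qed.

Lemma tzitzeica_prod_level n (k : R) :
  tzitzeica [set s : 'rV[R]_n.+1 | posorthant s /\ \prod_j s 0 j = k].
Proof.
exists (prod_level k); split; first split; [exact: smooth_on_monomial | split |].
- apply/funext => s /=; rewrite prod_levelE; congr (_ /\ _).
  apply/propext; split=> [?|/subr0_eq //]; apply/eqP; rewrite subr_eq0; exact/eqP.
- by move=> s [sp _]; exact: grad_prod_level_neq0.
exists (k^-2 / n.+1%:R ^+ n.+1) => s [sp sk] e he.
exact: gauss_curvature_prod_level.
Qed.

End ProductLevelSets.

Theorem mainTheorem8 (R : realType) (m d : nat) (n : 'I_d -> nat)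
    (c : 'rV[R]_d) :
  (3 <= m)%N -> (1 <= d)%N ->
  union_of_tzitzeica
    [set t : 'rV[R]_m | posorthant t /\ hermite n (\prod_(i < m) t 0 i) c = 0].
Proof.
case: m => [//|m] _ _; split=> [s [] //|t [tp ht]].
exists [set s | posorthant s /\ \prod_j s 0 j = \prod_j t 0 j].
split; first exact: tzitzeica_prod_level.
split=> // s [sp st]; split=> //.
exact: etrans (congr1 (fun p => hermite n p c) st) ht.
Qed.
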